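(* Let $G$ be a graph on $n$ vertices ($n$ even and sufficiently large) in which every vertex has at least $n-\sqrt{n}/4000$ neighbors. If a perfect matching of $G$ is chosen uniformly at random, then for any edge $e$ the probability that $e$ is contained in the matching is at most $\frac{1}{n-\sqrt{n}/1000}$. *)

From HB Require Import structures.
From mathcomp Require Import all_boot all_order all_algebra all_field.
Set Implicit Arguments. Unset Strict Implicit. Unset Printing Implicit Defensive.
Import Order.TTheory GRing.Theory Num.Theory.

Definition simple_graph (T : finType) (g : rel T) : Prop :=
  symmetric g /\ irreflexive g.

Definition degree (T : finType) (g : rel T) (x : T) : nat := #|[set y | g x y]|.

Definition is_perfect_matching (T : finType) (g : rel T) (M : {set {set T}}) : bool :=
  [forall A in M, [exists x, exists y, [&& A == [set x; y], x != y & g x y]]]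
  && partition M [set: T].

Definition perfect_matchings (T : finType) (g : rel T) : {set {set {set T}}} :=
  [set M | is_perfect_matching g M].

Local Open Scope ring_scope.
Definition prob_edge_in_pm (T : finType) (g : rel T) (x y : T) : algC :=
  (#|[set M in perfect_matchings g | [set x; y] \in M]|)%:R
  / (#|perfect_matchings g|)%:R.

(* Encode a perfect matching as a fixed-point-free involution m along edges.
   For an edge xy, a matching m through xy can be switched at any u with
   xu and y(m u) both edges: replacing xy, u(m u) by xu, y(m u) yields a
   matching avoiding xy, and (m, u) is recovered from the result.  At least
   deg x + deg y - n vertices u are switchable, so if a matchings contain xy
   and b avoid it, then a (deg x + deg y - n) <= b, i.e. the probability
   a / (a + b) is at most 1 / (deg x + deg y - n + 1). *)
From HB Require Import structures.
From mathcomp Require Import all_boot all_order all_algebra all_field.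
From mathcomp Require Import zify ring.
Import Order.TTheory GRing.Theory Num.Theory.

Set Implicit Arguments. Unset Strict Implicit. Unset Printing Implicit Defensive.

Section MatchingInvolutions.
Variables (T : finType) (g : rel T).
Hypothesis gsym : symmetric g.

Definition matching_inv (m : {ffun T -> T}) : bool :=
  [forall z, [&& m (m z) == z, m z != z & g z (m z)]].

Definition pairs_of (m : {ffun T -> T}) : {set {set T}} :=
  [set [set z; m z] | z : T].

Lemma matching_invP m : matching_inv m ->
  [/\ forall z, m (m z) = z, forall z, m z != z & forall z, g z (m z)].
Proof.
by move/forallP=> H; split=> z; case/and3P: (H z) => /eqP.
Qed.

Lemma set2_mem_eq (a b z w : T) : z \in [set a; b] -> w \in [set a; b] -> z != w ->
  [set a; b] = [set z; w].
Proof.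
by case/set2P=> -> /set2P [] -> //; rewrite ?eqxx // => _; rewrite setUC.
Qed.

Lemma pair_of_mem m a w : matching_inv m -> w \in [set a; m a] ->
  [set a; m a] = [set w; m w].
Proof.
by case/matching_invP=> mK _ _ /set2P [] -> //; rewrite mK setUC.
Qed.

Lemma pairs_of_perfect m : matching_inv m -> is_perfect_matching g (pairs_of m).
Proof.
move=> mm; have [mK mfree medge] := matching_invP mm.
apply/andP; split.
  apply/forallP=> A; apply/implyP=> /imsetP [z _ ->].
  by apply/existsP; exists z; apply/existsP; exists (m z); rewrite eqxx eq_sym mfree medge.
apply/and3P; split.
- apply/eqP/setP=> w; rewrite in_setT; apply/bigcupP; exists [set w; m w].
    by apply/imsetP; exists w.
  by rewrite set21.
- apply/trivIsetP=> A B /imsetP [a _ ->] /imsetP [b _ ->] neq.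
  rewrite -setI_eq0; apply/eqP/setP=> w; rewrite in_set0 in_setI.
  apply/negbTE/negP=> /andP [wa wb].
  by move: neq; rewrite (pair_of_mem mm wa) (pair_of_mem mm wb) eqxx.
- apply/negP=> /imsetP [a _ a0].
  by have := set21 a (m a); rewrite -a0 in_set0.
Qed.

Lemma pairs_of_inj m1 m2 : matching_inv m1 -> matching_inv m2 ->
  pairs_of m1 = pairs_of m2 -> m1 = m2.
Proof.
move=> mm1 mm2 E; have [_ m1free _] := matching_invP mm1.
apply/ffunP=> z.
have : [set z; m1 z] \in pairs_of m2 by rewrite -E; apply/imsetP; exists z.
case/imsetP=> w _ H.
have zw : z \in [set w; m2 w] by rewrite -H set21.
rewrite (pair_of_mem mm2 zw) in H.
have : m1 z \in [set z; m2 z] by rewrite -H set22.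
by case/set2P=> // h; move: (m1free z); rewrite h eqxx.
Qed.

Lemma mem_pairs_of m x y : matching_inv m -> x != y ->
  ([set x; y] \in pairs_of m) = (m x == y).
Proof.
move=> mm xy; apply/idP/idP; last by move/eqP=> <-; apply/imsetP; exists x.
case/imsetP=> w _ H.
have xw : x \in [set w; m w] by rewrite -H set21.
rewrite (pair_of_mem mm xw) in H.
have : y \in [set x; m x] by rewrite -H set22.
by case/set2P=> [yx|->//]; move: xy; rewrite yx eqxx.
Qed.

Lemma perfect_matching_pairs_of M : is_perfect_matching g M ->
  exists2 m, matching_inv m & M = pairs_of m.
Proof.
case/andP=> /forallP Medge /and3P [/eqP Mcover Mtriv M0].
have Mz z : z \in cover M by rewrite Mcover in_setT.
have block_edge z : exists a b, [/\ pblock M z = [set a; b], a != b & g a b].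
  have := Medge (pblock M z); rewrite (pblock_mem (Mz z)) /=.
  by case/existsP=> a /existsP [b /and3P [/eqP -> ab gab]]; exists a, b.
pose m := [ffun z => odflt z [pick w in pblock M z | w != z]].
have mP z : [/\ m z \in pblock M z, m z != z & pblock M z = [set z; m z]].
  have [a [b [Ez ab gab]]] := block_edge z.
  have zz : z \in pblock M z by rewrite mem_pblock.
  rewrite /m ffunE; case: pickP => [w /andP [wz w_z] | none] /=.
    by split=> //; rewrite eq_sym in w_z; rewrite Ez (set2_mem_eq _ _ w_z) // -Ez.
  exfalso; move: zz; rewrite Ez => /set2P [] z_ab.
    by have := none b; rewrite Ez set22 /= z_ab eq_sym ab.
  by have := none a; rewrite Ez set21 /= z_ab ab.
have pblock_m z : pblock M (m z) = pblock M z.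
  by have [mz _ _] := mP z; exact: def_pblock Mtriv (pblock_mem (Mz z)) mz.
exists m.
  apply/forallP=> z; have [mz mfree Ez] := mP z.
  have [mmz mmfree _] := mP (m z).
  apply/and3P; split=> //.
    rewrite pblock_m Ez in mmz.
    by case/set2P: mmz => [->//|mmz]; rewrite mmz eqxx in mmfree.
  have [a [b [Eab ab gab]]] := block_edge z.
  have zab : z \in [set a; b] by rewrite -Eab mem_pblock.
  move: mz mfree; rewrite Eab.
  by case/set2P: zab => -> /set2P [] -> /negP; rewrite ?eqxx // => _; rewrite // gsym.
apply/setP=> A; apply/idP/idP.
  move=> AM; have: A != set0 by apply: contraNneq M0 => <-.
  case/set0Pn=> z Az; apply/imsetP; exists z => //.
  by have [_ _ <-] := mP z; rewrite (def_pblock Mtriv AM Az).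
by case/imsetP=> z _ ->; have [_ _ <-] := mP z; exact: pblock_mem.
Qed.

Lemma card_perfect_matchings (P : pred {set {set T}}) :
  #|[set M in perfect_matchings g | P M]| =
  #|[set m | matching_inv m && P (pairs_of m)]|.
Proof.
have inj : {in [set m | matching_inv m && P (pairs_of m)] &, injective pairs_of}.
  by move=> m1 m2; rewrite !inE => /andP [mm1 _] /andP [mm2 _]; exact: pairs_of_inj.
rewrite -(card_in_imset inj); apply: eq_card => M; rewrite !inE; apply/idP/idP.
  case/andP=> PM PMM; have [m mm defM] := perfect_matching_pairs_of PM.
  by apply/imsetP; exists m; rewrite // inE mm -defM.
case/imsetP=> m; rewrite inE => /andP [mm Pm] ->.
by rewrite Pm andbT pairs_of_perfect.
Qed.

End MatchingInvolutions.

Section Switching.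
Variables (T : finType) (g : rel T) (x y : T).
Hypotheses (gsym : symmetric g) (girr : irreflexive g) (gxy : g x y).

Definition matchings_through : {set {ffun T -> T}} :=
  [set m | matching_inv g m && (m x == y)].

Definition matchings_avoiding : {set {ffun T -> T}} :=
  [set m | matching_inv g m && (m x != y)].

Local Notation A := matchings_through.
Local Notation B := matchings_avoiding.

Lemma matchings_throughP m : reflect (matching_inv g m /\ m x = y) (m \in A).
Proof. by rewrite inE; apply: (iffP andP) => -[-> /eqP]. Qed.

Definition switch (m : {ffun T -> T}) (u : T) : {ffun T -> T} :=
  [ffun z => if z == x then u else if z == u then x else if z == y then m u
             else if z == m u then y else m z].

Definition switchable (m : {ffun T -> T}) : {set T} :=
  [set u | [&& u != x, u != y, g x u & g y (m u)]].

Lemma switchable_distinct m u : matching_inv g m -> m x = y -> u \in switchable m ->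
  [/\ x != y, m y = x, m u != x, m u != y & m u != u].
Proof.
move=> mm mx; have [mK mfree _] := matching_invP mm.
rewrite inE => /and4P [ux uy _ _].
have my : m y = x by rewrite -mx mK.
split=> //; first by apply: contraTneq gxy => ->; rewrite girr.
- by apply: contraNneq uy => mux; rewrite -mx -mux mK.
- by apply: contraNneq ux => muy; rewrite -my -muy mK.
Qed.

Lemma switchE m u : matching_inv g m -> m x = y -> u \in switchable m ->
  [/\ switch m u x = u, switch m u u = x, switch m u y = m u, switch m u (m u) = y &
   forall z, z != x -> z != u -> z != y -> z != m u -> switch m u z = m z].
Proof.
move=> mm mx uS; have [xy _ mux muy muu] := switchable_distinct mm mx uS.
move: uS; rewrite inE => /and4P [ux uy _ _].
split.
- by rewrite ffunE eqxx.
- by rewrite ffunE (negbTE ux) eqxx.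
- by rewrite ffunE eq_sym (negbTE xy) eq_sym (negbTE uy) eqxx.
- by rewrite ffunE (negbTE mux) (negbTE muu) (negbTE muy) eqxx.
- by move=> z /negbTE zx /negbTE zu /negbTE zy /negbTE zmu; rewrite ffunE zx zu zy zmu.
Qed.

Lemma switch_matching_inv m u : matching_inv g m -> m x = y -> u \in switchable m ->
  matching_inv g (switch m u).
Proof.
move=> mm mx uS; have [mK mfree medge] := matching_invP mm.
have [Sx Su Sy Smu Sz] := switchE mm mx uS.
have [xy my mux muy muu] := switchable_distinct mm mx uS.
move: uS; rewrite inE => /and4P [ux uy gxu gymu].
apply/forallP=> z.
case: (z =P x) => [->|/eqP zx]; first by rewrite Sx Su eqxx ux gxu.
case: (z =P u) => [->|/eqP zu]; first by rewrite Su Sx eqxx eq_sym ux gsym gxu.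
case: (z =P y) => [->|/eqP zy]; first by rewrite Sy Smu eqxx muy gymu.
case: (z =P m u) => [->|/eqP zmu]; first by rewrite Smu Sy eqxx eq_sym muy gsym gymu.
have mzx : m z != x by apply: contraNneq zy => h; rewrite -mx -h mK.
have mzu : m z != u by apply: contraNneq zmu => <-; rewrite mK.
have mzy : m z != y by apply: contraNneq zx => h; rewrite -my -h mK.
have mzmu : m z != m u by apply: contraNneq zu => h; rewrite -(mK z) h mK.
by rewrite Sz // Sz // mK eqxx mfree medge.
Qed.

Lemma switch_inj m1 u1 m2 u2 :
  matching_inv g m1 -> m1 x = y -> u1 \in switchable m1 ->
  matching_inv g m2 -> m2 x = y -> u2 \in switchable m2 ->
  switch m1 u1 = switch m2 u2 -> m1 = m2 /\ u1 = u2.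
Proof.
move=> mm1 m1x u1S mm2 m2x u2S E.
have [m1K _ _] := matching_invP mm1; have [m2K _ _] := matching_invP mm2.
have [S1x _ S1y _ S1z] := switchE mm1 m1x u1S.
have [S2x _ S2y _ S2z] := switchE mm2 m2x u2S.
have u12 : u1 = u2 by rewrite -S1x E S2x.
subst u2; split=> //.
have mu12 : m1 u1 = m2 u1 by rewrite -S1y E S2y.
apply/ffunP=> z.
case: (z =P x) => [->|/eqP zx]; first by rewrite m1x m2x.
case: (z =P y) => [->|/eqP zy]; first by rewrite -[in LHS]m1x -[in RHS]m2x m1K m2K.
case: (z =P u1) => [->|/eqP zu] //.
case: (z =P m1 u1) => [->|/eqP zmu]; first by rewrite m1K mu12 m2K.
by rewrite -S1z // E S2z // -mu12.
Qed.

Lemma card_switchable m : matching_inv g m -> m x = y ->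
  (degree g x + degree g y <= #|T| + #|switchable m|)%N.
Proof.
move=> mm mx; have [mK _ _] := matching_invP mm.
set NX := ~: [set u | g x u].
set PY := m @^-1: (~: [set u | g y u]).
have cardNX : (degree g x + #|NX| = #|T|)%N by rewrite cardsC.
have cardPY : (degree g y + #|PY| = #|T|)%N.
  by rewrite card_preimset ?cardsC //; exact: can_inj mK.
have notS : ~: switchable m \subset y |: (NX :|: PY).
  apply/subsetP=> u; rewrite !inE.
  case: (u =P x) => [->|_]; first by rewrite girr !orbT.
  by case: (u == y); case: (g x u); case: (g y (m u)).
(* x lies in both NX and PY, which compensates for the extra vertex y *)
have xNXPY : (1 <= #|NX :&: PY|)%N.
  by apply/card_gt0P; exists x; rewrite !inE girr mx girr.
have := subset_leq_card notS; have := cardsU1 y (NX :|: PY).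
have := cardsU NX PY; have := cardsC (switchable m).
have : (#|NX :&: PY| <= #|NX|)%N by apply/subset_leq_card/subsetIl.
lia.
Qed.

Lemma switching_count :
  (#|A| * (degree g x + degree g y) <= #|A| * #|T| + #|B|)%N.
Proof.
set S := [set p : {ffun T -> T} * T | (p.1 \in A) && (p.2 \in switchable p.1)].
have switchS_inj : {in S &, injective (fun p => switch p.1 p.2)}.
  move=> [m1 u1] [m2 u2]; rewrite inE /= => /andP [/matchings_throughP [mm1 m1x] u1S].
  rewrite inE /= => /andP [/matchings_throughP [mm2 m2x] u2S] E.
  by have [-> ->] := switch_inj mm1 m1x u1S mm2 m2x u2S E.
have S_B : (#|S| <= #|B|)%N.
  rewrite -(card_in_imset switchS_inj); apply/subset_leq_card/subsetP=> M.
  case/imsetP=> [[m u]]; rewrite inE /= => /andP [/matchings_throughP [mm mx] uS] ->.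
  rewrite inE switch_matching_inv //=; have [-> _ _ _ _] := switchE mm mx uS.
  by move: uS; rewrite inE => /and4P [].
have sumS : (\sum_(m in A) #|switchable m| = #|S|)%N.
  rewrite -sum1_card (eq_bigl (fun p => (p.1 \in A) && (p.2 \in switchable p.1))).
    rewrite -(pair_big_dep (mem A) (fun m => mem (switchable m)) (fun _ _ => 1%N)).
    by apply: eq_bigr => m _; rewrite sum1_card.
  by move=> p; rewrite inE.
rewrite -sum_nat_const; apply: (@leq_trans (\sum_(m in A) (#|T| + #|switchable m|))).
  by apply: leq_sum => m /matchings_throughP [mm mx]; exact: card_switchable.
by rewrite big_split /= sum_nat_const sumS leq_add2l.
Qed.

Lemma card_perfect_matchings_through :
  #|[set M in perfect_matchings g | [set x; y] \in M]| = #|A|.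
Proof.
have xy : x != y by apply: contraTneq gxy => ->; rewrite girr.
rewrite card_perfect_matchings //; apply: eq_card => m; rewrite !inE.
by case mm: (matching_inv g m); rewrite //= (mem_pairs_of mm xy).
Qed.

Lemma card_perfect_matchings_split : #|perfect_matchings g| = (#|A| + #|B|)%N.
Proof.
transitivity #|[set M in perfect_matchings g | predT M]|.
  by apply: eq_card => M; rewrite !inE andbT.
rewrite card_perfect_matchings // -(cardsID [set m : {ffun T -> T} | m x == y]).
by congr addn; apply: eq_card => m; rewrite !inE /= andbT // andbC.
Qed.

End Switching.

Local Open Scope ring_scope.

Lemma ratio_le_inv (R : numFieldType) (a b n d : nat) (c : R) :
  0 < c -> c <= d%:R - n%:R + 1 -> (a * d <= a * n + b)%N ->
  a%:R / (a + b)%:R <= 1 / c.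
Proof.
move=> c0 cd abd.
have [->|a0] := eqVneq a 0%N; first by rewrite mul0r divr_ge0 ?ler01 ?ltW.
have ab0 : 0 < (a + b)%:R :> R by rewrite ltr0n addn_gt0 lt0n a0.
rewrite ler_pdivrMr // mul1r mulrC ler_pdivlMr //.
apply: le_trans (_ : a%:R * (d%:R - n%:R + 1) <= _); first by rewrite ler_wpM2l.
have : (a * d)%:R <= (a * n + b)%:R :> R by rewrite ler_nat.
rewrite natrD !natrM -subr_ge0 => abdR; rewrite natrD -subr_ge0.
suff -> : a%:R + b%:R - a%:R * (d%:R - n%:R + 1) =
  a%:R * n%:R + b%:R - a%:R * d%:R :> R by [].
by ring.
Qed.

Lemma sqrt_le_nat (R : numFieldType) (n : nat) (s : R) :
  (0 < n)%N -> 0 <= s -> s ^+ 2 = n%:R -> s <= n%:R.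
Proof.
move=> n0 s0 sn.
case/orP: (real_leVge (ger0_real s0) (real1 R)) => s1.
  by apply: le_trans s1 _; rewrite ler1n.
by rewrite -sn expr2 ler_peMr.
Qed.

Lemma degree_sum_lower_bound (R : numFieldType) (n dx dy : nat) (s : R) :
  0 <= s -> n%:R - s / 4000 <= dx%:R -> n%:R - s / 4000 <= dy%:R ->
  n%:R - s / 1000 <= (dx + dy)%:R - n%:R + 1.
Proof.
move=> s0 dxge dyge; rewrite natrD -subr_ge0.
suff -> : dx%:R + dy%:R - n%:R + 1 - (n%:R - s / 1000) =
    (dx%:R - (n%:R - s / 4000)) + (dy%:R - (n%:R - s / 4000)) + (1 + s / 2000) :> R.
  rewrite addr_ge0 ?(addr_ge0 ler01) ?divr_ge0 ?ler0n //.
  by rewrite addr_ge0 ?subr_ge0.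
by field.
Qed.

Theorem mainTheorem14 :
  exists N : nat, forall n : nat, (N <= n)%N -> ~~ odd n ->
  forall g : rel 'I_n, simple_graph g ->
  (forall v : 'I_n, (n%:R - sqrtC n%:R / 4000 <= (degree g v)%:R :> algC)) ->
  forall x y : 'I_n, g x y ->
  prob_edge_in_pm g x y <= 1 / (n%:R - sqrtC n%:R / 1000).
Proof.
exists 0%N => n _ _ g [gsym girr] deg_ge x y gxy.
have n0 : (0 < n)%N := leq_ltn_trans (leq0n x) (ltn_ord x).
have s0 : 0 <= sqrtC n%:R :> algC by rewrite sqrtC_ge0 ler0n.
have sn : sqrtC n%:R <= n%:R :> algC by apply: sqrt_le_nat; rewrite ?sqrtCK.
have c0 : 0 < n%:R - sqrtC n%:R / 1000 :> algC.
  rewrite subr_gt0 ltr_pdivrMr ?ltr0n //; apply: le_lt_trans sn _.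
  by rewrite ltr_pMr ?ltr1n // ltr0n.
have count := switching_count gsym girr gxy; rewrite card_ord in count.
rewrite /prob_edge_in_pm card_perfect_matchings_through //.
rewrite (card_perfect_matchings_split x y gsym).
apply: ratio_le_inv c0 _ count.
exact: degree_sum_lower_bound.
Qed.
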